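(* Let $(\tau,\eta)\in\Sigma$ with $\gamma=\mathrm{Re}\,\tau=0$. (i) If $(\tau,\eta)$ is not a point with $\delta=-\dot v\eta\pm\frac{\dot H}{\sqrt{\dot\rho(1+\dot\alpha\dot H^2)}}\eta$, and $\omega_1(\tau,\eta)\in i\mathbb R\setminus\{0\}$, then $\partial_\gamma\omega_1(\tau,\eta)\in\mathbb R\setminus\{0\}$. (ii) If $\omega_2(\tau,\eta)\in i\mathbb R\setminus\{0\}$, then $\partial_\gamma\omega_2(\tau,\eta)\in\mathbb R\setminus\{0\}$.
   Context: Constants of a basic state: $\dot v\neq0$, $\dot\rho>0$, $\dot H\neq0$, $\dot\alpha>0$ with $\dot\alpha\dot H^2\neq1$; $\varepsilon>0$ a parameter. Write $\tau=\gamma+i\delta$, $\Sigma=\{(\tau,\eta)\in\mathbb C\times\mathbb R:|\tau|^2+\eta^2=1,\ \gamma\ge0\}$, $\mu=\tau+i\dot v\eta$. Set \[ \omega_1^2=\eta^2+\frac{\dot\alpha\dot\rho^2\mu^4}{(\mu^2\dot\rho\dot\alpha+\eta^2)\dot H^2+\mu^2\dot\rho},\qquad \omega_2^2=\varepsilon^2\tau^2+\eta^2 . \] For $\gamma>0$, $\omega_1$ and $\omega_2$ denote the square roots with strictly positive real part; they are extended by continuity to $\gamma=0$ (where defined). $\partial_\gamma$ is the partial derivative in $\gamma$ with $\delta,\eta$ fixed. *)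

From mathcomp Require Import all_boot all_order all_algebra.
From mathcomp Require Import complex.
From mathcomp Require Import reals.
Set Implicit Arguments. Unset Strict Implicit. Unset Printing Implicit Defensive.
Import Order.TTheory GRing.Theory Num.Theory.
Local Open Scope ring_scope.
Local Open Scope complex_scope.

Section Defs.
Variable R : realType.

Definition cRe (z : R[i]) : R := mathcomp.real_closed.complex.Re z.
Definition cIm (z : R[i]) : R := mathcomp.real_closed.complex.Im z.

Definition mu (v : R) (tau : R[i]) (eta : R) : R[i] := tau + (v * eta)*i.

Definition om1sq (v rho H al : R) (tau : R[i]) (eta : R) : R[i] :=
  let m := mu v tau eta in
  eta%:C ^+ 2 + al%:C * rho%:C ^+ 2 * m ^+ 4 /
    ((m ^+ 2 * rho%:C * al%:C + eta%:C ^+ 2) * H%:C ^+ 2 + m ^+ 2 * rho%:C).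

Definition om2sq (eps : R) (tau : R[i]) (eta : R) : R[i] :=
  eps%:C ^+ 2 * tau ^+ 2 + eta%:C ^+ 2.

Definition inSigma (tau : R[i]) (eta : R) : Prop :=
  (cRe tau ^+ 2 + cIm tau ^+ 2 + eta ^+ 2 = 1 :> R) /\ 0 <= cRe tau.

Definition cabs (z : R[i]) : R := Num.sqrt (cRe z ^+ 2 + cIm z ^+ 2).

Definition right_lim0 (f : R -> R[i]) (l : R[i]) : Prop :=
  forall e : R, 0 < e -> exists d : R, 0 < d /\
    forall h : R, 0 < h < d -> cabs (f h - l) < e.

Definition pos_re_sqrt_branch (F W : R -> R[i]) : Prop :=
  exists h0 : R, 0 < h0 /\
    forall h : R, 0 < h < h0 -> W h ^+ 2 = F h /\ 0 < cRe (W h).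

Definition nonzero_imag (z : R[i]) : Prop := cRe z = 0 /\ z <> 0.
Definition nonzero_real (z : R[i]) : Prop := cIm z = 0 /\ z <> 0.

(* Given the branch W (omega for gamma > 0, with delta, eta fixed) and its
   continuous extension w to gamma = 0, partial_gamma omega at gamma = 0 is
   d, in R \ {0}: the (one-sided, gamma >= 0) derivative in gamma exists
   and is a nonzero real. *)
Definition dgamma0_nonzero_real (W : R -> R[i]) (w : R[i]) : Prop :=
  exists d : R[i], nonzero_real d /\ right_lim0 (fun h => (W h - w) / h%:C) d.

End Defs.

(* At gamma = 0 put tau = i delta.  Along the line tau = gamma + i delta, omega_j^2 is
   Phi (m0 + gamma) for a function Phi that is complex differentiable at a purely imaginary
   point m0 (m0 = i (delta + v eta) for omega_1, written in terms of mu, and m0 = i delta for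
   omega_2).  If W^2 = Phi (m0 + gamma) and W --> w <> 0 as gamma --> 0+, then
   w^2 = Phi m0 and (W - w) / gamma = (Phi (m0 + gamma) - Phi m0) / gamma / (W + w), so
   partial_gamma omega = Phi'(m0) / (2 w).  Phi has real coefficients and is even, so
   Phi'(m0) is purely imaginary, like w, and the quotient is real.  It is nonzero because
   of the relation w^2 = Phi m0: for omega_2 it rules out delta = 0, and for omega_1 it rules
   out mu = 0 and, by AM-GM, the vanishing of the other factor of Phi'(m0). *)

From mathcomp Require Import all_boot all_order all_algebra.
From mathcomp Require Import complex reals.
From mathcomp Require Import classical_sets topology normedtype derive.
From mathcomp Require Import ring lra.
Set Implicit Arguments.
Unset Strict Implicit.
Unset Printing Implicit Defensive.

Import Order.TTheory GRing.Theory Num.Theory.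
Import numFieldNormedType.Exports.
Local Open Scope classical_set_scope.
Local Open Scope ring_scope.
Local Open Scope complex_scope.

Lemma numField_scaleE {K : numFieldType} (a b : K) : a *: b = a * b.
Proof. by []. Qed.

Section SqrtQuotient.
Context {K : numFieldType} {T : Type} (G : set_system T) {PG : ProperFilter G}.
Variables (x f W : T -> K) (f0 w L : K).
Hypotheses (x_cvg0 : x @ G --> 0) (W_sqrt : \forall t \near G, x t != 0 /\ W t ^+ 2 = f t).
Hypotheses (W_cvg : W @ G --> w) (w_neq0 : w != 0).
Hypothesis f_quotient_cvg : (fun t => (f t - f0) / x t) @ G --> L.

Lemma sqrt_quotient_sqr : w ^+ 2 = f0.
Proof.
have f_cvg : f @ G --> f0.
  have : (fun t => f0 + x t * ((f t - f0) / x t)) @ G --> f0 + 0 * L.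
    exact: cvgD (cvg_cst _) (cvgM x_cvg0 f_quotient_cvg).
  rewrite mul0r addr0; apply: cvg_trans; apply: near_eq_cvg.
  by apply: filterS W_sqrt => t [xt0 _] /=; rewrite mulrC divfK // addrC subrK.
apply: (cvg_unique (@norm_hausdorff _ K) (cvgM W_cvg W_cvg)).
apply: cvg_trans f_cvg; apply: near_eq_cvg.
by apply: filterS W_sqrt => t [_ <-].
Qed.

Lemma cvg_sqrt_quotient : (fun t => (W t - w) / x t) @ G --> L / (w *+ 2).
Proof.
have Ww_cvg : (fun t => W t + w) @ G --> w *+ 2.
  by rewrite mulr2n; exact: cvgD W_cvg (cvg_cst _).
have w2_neq0 : w *+ 2 != 0 by rewrite mulrn_eq0.
have : (fun t => (f t - f0) / x t * (W t + w)^-1) @ G --> L / (w *+ 2).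
  exact: cvgM f_quotient_cvg (cvgV w2_neq0 Ww_cvg).
apply: cvg_trans; apply: near_eq_cvg.
apply: (filterS2 _ _ W_sqrt (cvgr_neq0 _ Ww_cvg w2_neq0)) => t [xt0 <-] Wt_neq0 /=.
by rewrite -sqrt_quotient_sqr; field; rewrite xt0 Wt_neq0.
Qed.

End SqrtQuotient.

Section RealIncrements.
Variable R : realType.
(* [R[i]] carries its normed-module structure, hence limits and derivatives, only as a
   numFieldType. *)
Local Notation C := (R[i] : numFieldType).

Lemma near_right0P (P : R -> Prop) :
  (\forall h \near 0^'+, P h) <-> exists2 d : R, 0 < d & forall h, 0 < h < d -> P h.
Proof.
split=> [[d /= d0 Pd]|[d d0 Pd]]; exists d => // h.
  by move=> /andP[h0 hd]; apply: Pd; rewrite //= /ball /= sub0r normrN gtr0_norm.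
by rewrite /ball /= sub0r normrN => hd h0; apply: Pd; rewrite h0 -(gtr0_norm h0).
Qed.

Lemma right_lim0_cvg (f : R -> C) (l : C) :
  right_lim0 f l <-> f h @[h --> 0^'+] --> l.
Proof.
split=> [fl|/(cvgrPdist_lt f) fl e e0].
  apply/(cvgrPdist_lt f) => -[e1 e2]; rewrite ltcE /= => /andP[/eqP-> e0].
  have [d [d0 fd]] := fl e1 e0; apply/near_right0P; exists d => // h hd.
  by rewrite distrC normc_def ltcR; exact: fd.
have /near_right0P[d d0 fd] := fl e%:C (ltac:(by rewrite ltcR)).
by exists d; split => // h hd; rewrite -ltcR -normc_def distrC; exact: fd.
Qed.

Lemma cvg_real0 : (fun h : R => h%:C : C) @ 0^'+ --> (0 : C).
Proof.
apply/right_lim0_cvg => e e0; exists e; split => // h /andP[h0 he].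
by rewrite subr0 /cabs /cRe /cIm /= expr0n addr0 sqrtr_sqr gtr0_norm.
Qed.

Lemma cvg_real_right0 : (fun h : R => h%:C : C) @ 0^'+ --> (0 : C)^'.
Proof.
move=> A /= A0; apply: filterS2 _ _ (nbhs_right_gt 0) (cvg_real0 A0) => h h0 hA.
by apply: hA; rewrite eq_complex /= negb_and gt_eqF.
Qed.

Lemma cvg_real_quotient (f : C -> C) (a df : C) : is_derive a 1 f df ->
  (fun h : R => (f (h%:C + a) - f a) / h%:C) @ 0^'+ --> df.
Proof.
move=> fdf.
have f_cvg : (fun h : C => h^-1 *: ((f \o shift a) (h *: 1) - f a)) @ 0^' --> df.
  by rewrite -(@derive_val _ _ _ _ _ _ _ fdf); exact: ex_derive.
apply: cvg_trans (cvg_comp _ _ cvg_real_right0 f_cvg).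
by apply: near_eq_cvg; near=> h; rewrite /= mulrC [_%:A]mulr1 addrC.
Unshelve. all: by end_near. Qed.

Lemma dgamma0_nonzero_real_sqrt (F : R -> C) (Phi : C -> C) (a dPhi : C)
    (W : R -> C) (w : C) :
  (forall h, F h = Phi (h%:C + a)) -> is_derive a 1 Phi dPhi ->
  pos_re_sqrt_branch F W -> right_lim0 W w -> w != 0 ->
  (w ^+ 2 = Phi a -> nonzero_real (dPhi / (w *+ 2))) ->
  dgamma0_nonzero_real W w.
Proof.
move=> FPhi Phi_der [h0 [h0_gt0 W_sqrt]] /right_lim0_cvg W_cvg w_neq0 dW_real.
have W_sqrt_near : \forall h \near 0^'+, (h%:C : C) != 0 /\ W h ^+ 2 = Phi (h%:C + a).
  apply/near_right0P; exists h0 => // h /[dup] /andP[h_gt0 _] /W_sqrt[WF _].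
  by rewrite -FPhi WF eq_complex /= negb_and gt_eqF.
have q_cvg := cvg_real_quotient Phi_der.
exists (dPhi / (w *+ 2)); split.
  exact/dW_real/(sqrt_quotient_sqr cvg_real0 W_sqrt_near W_cvg q_cvg).
exact/right_lim0_cvg/(cvg_sqrt_quotient cvg_real0 W_sqrt_near W_cvg w_neq0 q_cvg).
Qed.

End RealIncrements.

Section ComplexFacts.
Variable R : realType.
(* In ring_scope, ['i] alone is the generic imaginary unit of a numClosedFieldType, which
   [ring] does not identify with the constructor term ['i%C] of [sqr_i]. *)

Lemma i_neq0 : 'i%C != 0 :> R[i].
Proof. by rewrite eq_complex /= oner_eq0 andbF. Qed.

Lemma nonzero_imagP (w : R[i]) : nonzero_imag w -> exists2 c : R, c != 0 & w = 'i%C * c%:C.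
Proof.
case: w => a c; rewrite /nonzero_imag /cRe /= => -[-> w_neq0].
exists c; last by rewrite [LHS]complexE /= rmorph0 add0r.
by apply/eqP => c0; apply: w_neq0; rewrite c0.
Qed.

Lemma nonzero_real_C (r : R) : r != 0 -> nonzero_real r%:C.
Proof. by move=> r_neq0; split=> //; apply/eqP; rewrite fmorph_eq0. Qed.

End ComplexFacts.

Lemma om1_den_real_neq0 (R : rcfType) (v rho al H delta eta : R) : 0 < rho -> 0 < al ->
  delta <> - v * eta + H / Num.sqrt (rho * (1 + al * H ^+ 2)) * eta ->
  delta <> - v * eta - H / Num.sqrt (rho * (1 + al * H ^+ 2)) * eta ->
  eta ^+ 2 * H ^+ 2 - (delta + v * eta) ^+ 2 * (rho * (1 + al * H ^+ 2)) != 0.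
Proof.
move=> rho_gt0 al_gt0 delta_neq_plus delta_neq_minus.
(* With [q ^+ 2 = rho (1 + al H^2)] the expression is [(eta H)^2 - ((delta + v eta) q)^2],
   and each excluded value of [delta] is a zero of one factor. *)
have B_gt0 : 0 < rho * (1 + al * H ^+ 2).
  by rewrite mulr_gt0 // ltr_pwDl // mulr_ge0 ?sqr_ge0 ?ltW.
set q := Num.sqrt _ in delta_neq_plus delta_neq_minus *.
have q_neq0 : q != 0 by rewrite gt_eqF // sqrtr_gt0.
rewrite -[_ * H ^+ 2]exprMn -(sqr_sqrtr (ltW B_gt0)) -/q -exprMn subr_eq0 eqf_sqr negb_or.
apply/andP; split; apply/eqP => eta_H.
  by apply: delta_neq_plus; rewrite mulrAC -[H * eta]mulrC eta_H mulfK //; lra.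
by apply: delta_neq_minus; rewrite mulrAC -[H * eta]mulrC eta_H !mulNr mulfK //; lra.
Qed.

Lemma om1_dgamma0_neq0 (R : realFieldType) (rho al H eta s c : R) :
  0 < rho -> 0 < al -> c != 0 ->
  eta ^+ 2 * H ^+ 2 - s ^+ 2 * (rho * (1 + al * H ^+ 2)) != 0 ->
  - c ^+ 2 = eta ^+ 2 + al * rho ^+ 2 * s ^+ 4 /
    (eta ^+ 2 * H ^+ 2 - s ^+ 2 * (rho * (1 + al * H ^+ 2))) ->
  al * rho ^+ 2 * s ^+ 3 *
    (s ^+ 2 * (rho * (1 + al * H ^+ 2)) - 2 * (eta ^+ 2 * H ^+ 2)) /
    (c * (eta ^+ 2 * H ^+ 2 - s ^+ 2 * (rho * (1 + al * H ^+ 2))) ^+ 2) != 0.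
Proof.
set B := rho * _; set C := eta ^+ 2 * H ^+ 2; set D := C - _.
move=> rho_gt0 al_gt0 c_neq0 D_neq0 sqr_c.
have c2_gt0 : 0 < c ^+ 2 by rewrite exprn_even_gt0.
have eta2_ge0 := sqr_ge0 eta.
have sqr_cD : (c ^+ 2 + eta ^+ 2) * D + al * rho ^+ 2 * s ^+ 4 = 0.
  by move: sqr_c => /(congr1 ( *%R^~ D)) /=; rewrite mulrDl divfK //; lra.
have s_neq0 : s != 0.
  apply/eqP => s0; move: D_neq0 sqr_cD.
  rewrite /D s0 !expr0n /= mul0r subr0 mulr0 addr0 => C_neq0 /eqP.
  by rewrite mulf_eq0 (negbTE C_neq0) orbF; lra.
have s2B_neq : s ^+ 2 * B - 2 * C != 0.
  rewrite subr_eq0; apply/eqP => s2B.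
  have D_eq : D = - C by rewrite /D s2B; ring.
  have C_gt0 : 0 < C by rewrite lt0r -oppr_eq0 -D_eq D_neq0 mulr_ge0 ?sqr_ge0.
  have s4 : al * rho ^+ 2 * s ^+ 4 = (c ^+ 2 + eta ^+ 2) * C.
    by move: sqr_cD; rewrite D_eq; lra.
  have key : (c ^+ 2 + eta ^+ 2) * (1 + al * H ^+ 2) ^+ 2 = 4 * al * C.
    apply: (mulfI (_ : C * rho ^+ 2 != 0)).
      by rewrite gt_eqF // mulr_gt0 ?exprn_even_gt0 ?gt_eqF.
    transitivity ((c ^+ 2 + eta ^+ 2) * C * B ^+ 2); first by rewrite /B; ring.
    rewrite -s4; transitivity (al * rho ^+ 2 * (s ^+ 2 * B) ^+ 2); first by ring.
    by rewrite s2B; ring.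
  have : 0 <= eta ^+ 2 * (1 - al * H ^+ 2) ^+ 2 by rewrite mulr_ge0 ?sqr_ge0.
  have : 0 < c ^+ 2 * (1 + al * H ^+ 2) ^+ 2.
    have : 0 < 1 + al * H ^+ 2 by rewrite ltr_pwDl // mulr_ge0 ?sqr_ge0 ?ltW.
    by move=> /lt0r_neq0 ?; rewrite mulr_gt0 // exprn_even_gt0.
  (* [key] contradicts AM-GM: [(1 + al H^2)^2 >= 4 al H^2]. *)
  by move: key; rewrite /C; lra.
by rewrite !mulf_neq0 ?invr_eq0 ?mulf_neq0 ?expf_neq0 ?(lt0r_neq0 rho_gt0) ?(lt0r_neq0 al_gt0).
Qed.

Section Omega1.
Variable R : realType.
Local Notation C := (R[i] : numFieldType).
Variables (rho H al eta : R).

Definition om1_den (m : C) : C :=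
  (m ^+ 2 * rho%:C * al%:C + eta%:C ^+ 2) * H%:C ^+ 2 + m ^+ 2 * rho%:C.

Definition om1sq_of_mu (m : C) : C :=
  eta%:C ^+ 2 + al%:C * rho%:C ^+ 2 * m ^+ 4 / om1_den m.

Lemma om1sqE (v : R) (tau : R[i]) : om1sq v rho H al tau eta = om1sq_of_mu (mu v tau eta).
Proof. by []. Qed.

Lemma is_derive_om1_den (m : C) :
  is_derive m 1 om1_den ((2 * rho * (1 + al * H ^+ 2))%:C * m).
Proof. by rewrite /om1_den; apply: is_derive_eq; rewrite !numField_scaleE; ring. Qed.

Lemma is_derive_om1sq_of_mu (m : C) : om1_den m != 0 ->
  is_derive m 1 om1sq_of_mu
    ((2 * al * rho ^+ 2)%:C * m ^+ 3 *
      ((rho * (1 + al * H ^+ 2))%:C * m ^+ 2 + (2 * (eta ^+ 2 * H ^+ 2))%:C) /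
      om1_den m ^+ 2).
Proof.
move=> den_neq0; have den_der := is_derive_om1_den m.
have : is_derive m 1 (fun m => (om1_den m)^-1)
    (- om1_den m ^- 2 *: ((2 * rho * (1 + al * H ^+ 2))%:C * m)).
  apply: DeriveDef; first exact: derivableV den_neq0 ex_derive.
  by rewrite deriveV ?derive_val //; exact: ex_derive.
move=> inv_der; rewrite /om1sq_of_mu; apply: is_derive_eq.
by move: den_neq0; rewrite !numField_scaleE /om1_den => den_neq0; field.
Qed.

Lemma om1sq_dgamma0 (v delta : R) (W : R -> R[i]) (w : R[i]) : 0 < rho -> 0 < al ->
  eta ^+ 2 * H ^+ 2 - (delta + v * eta) ^+ 2 * (rho * (1 + al * H ^+ 2)) != 0 ->
  pos_re_sqrt_branch (fun g => om1sq v rho H al (g +i* delta) eta) W ->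
  right_lim0 W w -> nonzero_imag w -> dgamma0_nonzero_real W w.
Proof.
move=> rho_gt0 al_gt0 D_neq0 W_sqrt W_cvg /nonzero_imagP[c c_neq0 w_def]; subst w.
set s := delta + v * eta in D_neq0 *; set D := _ - _ in D_neq0.
have den_m0 : om1_den ('i%C * s%:C) = D%:C :> R[i] by rewrite /om1_den /D; ring: (sqr_i R).
have den_m0_neq0 : om1_den ('i%C * s%:C) != 0 by rewrite den_m0 fmorph_eq0.
have om1_der := is_derive_om1sq_of_mu den_m0_neq0.
apply: (dgamma0_nonzero_real_sqrt _ om1_der W_sqrt W_cvg).
- move=> h; rewrite om1sqE; congr om1sq_of_mu.
  by rewrite /mu [h +i* delta]complexE [(v * eta)*i]complexE /s /=; ring.
- by rewrite mulf_neq0 ?i_neq0 ?fmorph_eq0.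
rewrite /om1sq_of_mu den_m0 => sqr_w.
have sqr_c : - c ^+ 2 = eta ^+ 2 + al * rho ^+ 2 * s ^+ 4 / D.
  apply: complexI; transitivity (('i%C * c%:C) ^+ 2 : R[i]); first by ring: (sqr_i R).
  by rewrite sqr_w; field: (sqr_i R); rewrite fmorph_eq0.
rewrite (_ : _ / _ = (al * rho ^+ 2 * s ^+ 3 *
    (s ^+ 2 * (rho * (1 + al * H ^+ 2)) - 2 * (eta ^+ 2 * H ^+ 2)) / (c * D ^+ 2))%:C).
  exact/nonzero_real_C/(om1_dgamma0_neq0 rho_gt0 al_gt0 c_neq0 D_neq0 sqr_c).
by field: (sqr_i R); rewrite !fmorph_eq0 D_neq0 c_neq0 i_neq0.
Qed.

End Omega1.

Section Omega2.
Variable R : realType.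
Local Notation C := (R[i] : numFieldType).

Lemma om2sq_dgamma0 (eps delta eta : R) (W : R -> R[i]) (w : R[i]) : eps != 0 ->
  pos_re_sqrt_branch (fun g => om2sq eps (g +i* delta) eta) W ->
  right_lim0 W w -> nonzero_imag w -> dgamma0_nonzero_real W w.
Proof.
move=> eps_neq0 W_sqrt W_cvg /nonzero_imagP[c c_neq0 w_def]; subst w.
have om2sq_der : is_derive ('i%C * delta%:C : C) 1 (fun t : C => om2sq eps t eta : C)
    ((2 * eps ^+ 2)%:C * ('i%C * delta%:C)).
  by rewrite /om2sq; apply: is_derive_eq; rewrite !numField_scaleE; ring.
apply: (dgamma0_nonzero_real_sqrt _ om2sq_der W_sqrt W_cvg).
- by move=> h; rewrite [h +i* delta]complexE.
- by rewrite mulf_neq0 ?i_neq0 ?fmorph_eq0.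
rewrite /om2sq => sqr_w.
have sqr_c : - c ^+ 2 = eta ^+ 2 - eps ^+ 2 * delta ^+ 2.
  apply: complexI; transitivity (('i%C * c%:C) ^+ 2 : R[i]); first by ring: (sqr_i R).
  by rewrite sqr_w; ring: (sqr_i R).
have delta_neq0 : delta != 0.
  apply/eqP => delta0; move: sqr_c; rewrite delta0 expr0n mulr0 subr0.
  have : 0 < c ^+ 2 by rewrite exprn_even_gt0.
  have := sqr_ge0 eta; lra.
rewrite (_ : _ / _ = (eps ^+ 2 * delta / c)%:C); last first.
  by field: (sqr_i R); rewrite i_neq0 fmorph_eq0 c_neq0.
by apply: nonzero_real_C; rewrite !mulf_neq0 ?invr_eq0 ?expf_neq0.
Qed.

End Omega2.

Theorem lemma7p2 (R : realType) (v rho H al eps : R)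
  (hv : v != 0) (hrho : 0 < rho) (hH : H != 0) (hal : 0 < al)
  (halH : al * H ^+ 2 != 1) (heps : 0 < eps) :
  (* (i) *)
  (forall delta eta : R,
     inSigma (0 +i* delta) eta ->
     delta <> - v * eta + H / Num.sqrt (rho * (1 + al * H ^+ 2)) * eta ->
     delta <> - v * eta - H / Num.sqrt (rho * (1 + al * H ^+ 2)) * eta ->
     forall (W : R -> R[i]) (w : R[i]),
       pos_re_sqrt_branch (fun g => om1sq v rho H al (g +i* delta) eta) W ->
       right_lim0 W w ->
       nonzero_imag w ->
       dgamma0_nonzero_real W w)
  /\
  (* (ii) *)
  (forall delta eta : R,
     inSigma (0 +i* delta) eta ->
     forall (W : R -> R[i]) (w : R[i]),
       pos_re_sqrt_branch (fun g => om2sq eps (g +i* delta) eta) W ->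
       right_lim0 W w ->
       nonzero_imag w ->
       dgamma0_nonzero_real W w).
Proof.
split=> [delta eta _ delta_neq_plus delta_neq_minus W w | delta eta _ W w].
  apply: om1sq_dgamma0 => //.
  exact: om1_den_real_neq0 delta_neq_plus delta_neq_minus.
exact/om2sq_dgamma0/lt0r_neq0.
Qed.
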